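(* Assume (A1). Let $E=\mu\sigma(1-2b^2\beta)$. If $$\begin{aligned} &2b^2\beta-1<0,\\ &(2-E)(1+c+2\gamma)-\omega^2dhE>0,\\ &1-c+cE+\omega^2dhE+\gamma c-E\gamma-E\gamma c+E^2\gamma-E^2\gamma^2+E\gamma^2-\gamma>0,\\ &2\gamma+c-cE-\gamma E-\omega^2dhE<3, \end{aligned}$$ then the steady state $S^*$ of $G$ is locally asymptotically stable.
   Context: Let $g_I,g_P:\mathbb{R}\to\mathbb{R}$ be continuously differentiable functions, each satisfying: $g(0)=0$ and $g$ strictly increasing; $g$ convex on $(-\infty,0]$ and concave on $[0,+\infty)$, with maximal slope attained at $0$ and $g'(0)=1$; $g$ bounded above and below. Parameters: $A>0$, $c\in(0,1)$, $\gamma>0$, $\omega\in[0,1]$, $h>0$, $d>0$, $\sigma>0$, $\mu>0$, $F^*>0$, $b>0$, $\beta>0$. Let $G=(G_1,G_2,G_3):\mathbb{R}^3\to\mathbb{R}^3$ be defined by $G_1(Y,P,Z)=A+cY+\gamma g_I(Y-Z)+\omega hP$, $G_2(Y,P,Z)=P+\sigma g_P\big(\mu\big((1-\omega)F^*+\omega dY-P+b(2\alpha(Y,P)-1)\big)\big)$, $G_3(Y,P,Z)=Y$, where $\alpha(Y,P)=\dfrac{1}{1+e^{-4b\beta(P-(1-\omega)F^*-\omega dY)}}$, and consider the system $(Y_{t+1},P_{t+1},Z_{t+1})=G(Y_t,P_t,Z_t)$. Assumption (A1): $1-c-hd>0$. $S^*=(Y^*,P^*,Y^* )$ is the fixed point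 with $Y^*=\frac{A+\omega(1-\omega)hF^*}{1-c-\omega^2dh}$, $P^*=\frac{(1-\omega)(1-c)F^*+\omega dA}{1-c-\omega^2dh}$. *)

From Stdlib Require Import Reals Lra.
Open Scope R_scope.

Definition convex_on_nonpos (g : R -> R) : Prop :=
  forall x y t, x <= 0 -> y <= 0 -> 0 <= t <= 1 ->
    g (t * x + (1 - t) * y) <= t * g x + (1 - t) * g y.

Definition concave_on_nonneg (g : R -> R) : Prop :=
  forall x y t, 0 <= x -> 0 <= y -> 0 <= t <= 1 ->
    t * g x + (1 - t) * g y <= g (t * x + (1 - t) * y).

Definition admissible_g (g : R -> R) : Prop :=
  (exists g' : R -> R,
      (forall x, derivable_pt_lim g x (g' x)) /\ continuity g' /\
      g' 0 = 1 /\ (forall x, g' x <= g' 0)) /\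
  g 0 = 0 /\
  (forall x y, x < y -> g x < g y) /\
  convex_on_nonpos g /\ concave_on_nonneg g /\
  (exists m M, forall x, m <= g x <= M).

Definition alpha (b beta omega d Fs Y P : R) : R :=
  / (1 + exp (- (4 * b * beta * (P - (1 - omega) * Fs - omega * d * Y)))).

Definition G (gI gP : R -> R) (A c gamma omega h d sigma mu Fs b beta : R)
  (s : R * R * R) : R * R * R :=
  let '(Y, P, Z) := s in
  (A + c * Y + gamma * gI (Y - Z) + omega * h * P,
   P + sigma * gP (mu * ((1 - omega) * Fs + omega * d * Y - P
                         + b * (2 * alpha b beta omega d Fs Y P - 1))),
   Y).

Definition Ystar (A c omega h d Fs : R) : R :=
  (A + omega * (1 - omega) * h * Fs) / (1 - c - omega ^ 2 * d * h).

Definition Pstar (A c omega h d Fs : R) : R :=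
  ((1 - omega) * (1 - c) * Fs + omega * d * A) / (1 - c - omega ^ 2 * d * h).

Definition Sstar (A c omega h d Fs : R) : R * R * R :=
  (Ystar A c omega h d Fs, Pstar A c omega h d Fs, Ystar A c omega h d Fs).

Definition dist3 (u v : R * R * R) : R :=
  let '(x1, x2, x3) := u in let '(y1, y2, y3) := v in
  sqrt ((x1 - y1) ^ 2 + (x2 - y2) ^ 2 + (x3 - y3) ^ 2).

Definition locally_asymptotically_stable (F : R * R * R -> R * R * R) (s : R * R * R) : Prop :=
  (forall eps, 0 < eps -> exists delta, 0 < delta /\
     forall x, dist3 x s < delta -> forall n : nat, dist3 (Nat.iter n F x) s < eps) /\
  (exists eta, 0 < eta /\
     forall x, dist3 x s < eta -> Un_cv (fun n => dist3 (Nat.iter n F x) s) 0).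

From Stdlib Require Import Reals Lra Psatz.
From Coquelicot Require Import Coquelicot.
Open Scope R_scope.

(* The Jury conditions in the hypotheses say that the characteristic polynomial
   X^3 + a2 X^2 + a1 X + a0 of the Jacobian J of G at S* passes the Schur-Cohn test; since
   the test is open, so does the rescaled polynomial with roots multiplied by some rho > 1.
   The first Schur-Cohn reduction step produces a positive definite quadratic form W that
   decreases along solutions of the recurrence with these coefficients, hence at rate
   rho^-2 along solutions of the original one. Every coordinate of an orbit of J solves
   that recurrence (Cayley-Hamilton), so summing W over the coordinates gives a quadratic
   Lyapunov function V with rho^2 V (J x) <= V x. As g_I and g_P are differentiable at 0,
   the nonlinear part of G is o(|x|) and near S* uses up only part of the margin, so V
   decreases geometrically along orbits of G. *)

(** * Vectors and quadratic forms on R^3 *)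

Notation R3 := (R * R * R)%type.

Definition add3 (x y : R3) : R3 :=
  let '(x1, x2, x3) := x in let '(y1, y2, y3) := y in (x1 + y1, x2 + y2, x3 + y3).

Definition sub3 (x y : R3) : R3 :=
  let '(x1, x2, x3) := x in let '(y1, y2, y3) := y in (x1 - y1, x2 - y2, x3 - y3).

Definition scal3 (k : R) (x : R3) : R3 :=
  let '(x1, x2, x3) := x in (k * x1, k * x2, k * x3).

Definition sqnorm3 (x : R3) : R := let '(x1, x2, x3) := x in x1 ^ 2 + x2 ^ 2 + x3 ^ 2.

Lemma pair3_eq (a1 a2 a3 b1 b2 b3 : R) :
  a1 = b1 -> a2 = b2 -> a3 = b3 -> (a1, a2, a3) = (b1, b2, b3).
Proof. intros -> -> ->; reflexivity. Qed.

Lemma sqnorm3_ge0 (x : R3) : 0 <= sqnorm3 x.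
Proof. destruct x as [[x1 x2] x3]; simpl; nra. Qed.

Lemma dist3_sqnorm3 (p s : R3) : dist3 p s = sqrt (sqnorm3 (sub3 p s)).
Proof. destruct p as [[? ?] ?], s as [[? ?] ?]; reflexivity. Qed.

Lemma sqr_add_le_young (u v th : R) :
  0 < th -> (u + v) ^ 2 <= (1 + th) * u ^ 2 + (1 + / th) * v ^ 2.
Proof.
  intros Hth.
  assert (Hsq : (1 + th) * u ^ 2 + (1 + / th) * v ^ 2 - (u + v) ^ 2 = th * (u - v / th) ^ 2)
    by (field; lra).
  pose proof (pow2_ge_0 (u - v / th)). nra.
Qed.

Lemma cauchy_schwarz3 (a0 a1 a2 y0 y1 y2 : R) :
  (a0 * y0 + a1 * y1 + a2 * y2) ^ 2 <= (a0 ^ 2 + a1 ^ 2 + a2 ^ 2) * (y0 ^ 2 + y1 ^ 2 + y2 ^ 2).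
Proof.
  assert (Hlagrange : (a0 ^ 2 + a1 ^ 2 + a2 ^ 2) * (y0 ^ 2 + y1 ^ 2 + y2 ^ 2)
      - (a0 * y0 + a1 * y1 + a2 * y2) ^ 2
    = (a0 * y1 - a1 * y0) ^ 2 + (a0 * y2 - a2 * y0) ^ 2 + (a1 * y2 - a2 * y1) ^ 2) by ring.
  pose proof (pow2_ge_0 (a0 * y1 - a1 * y0)). pose proof (pow2_ge_0 (a0 * y2 - a2 * y0)).
  pose proof (pow2_ge_0 (a1 * y2 - a2 * y1)). lra.
Qed.

Lemma cauchy_schwarz3_weighted (A1 A2 A3 c1 c2 c3 X1 X2 X3 : R) :
  0 < A1 -> 0 < A2 -> 0 < A3 ->
  (c1 * X1 + c2 * X2 + c3 * X3) ^ 2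
    <= (c1 ^ 2 / A1 + c2 ^ 2 / A2 + c3 ^ 2 / A3) * (A1 * X1 ^ 2 + A2 * X2 ^ 2 + A3 * X3 ^ 2).
Proof.
  intros H1 H2 H3.
  assert (Hlagrange :
      (c1 ^ 2 / A1 + c2 ^ 2 / A2 + c3 ^ 2 / A3) * (A1 * X1 ^ 2 + A2 * X2 ^ 2 + A3 * X3 ^ 2)
      - (c1 * X1 + c2 * X2 + c3 * X3) ^ 2
    = (c1 * A2 * X2 - c2 * A1 * X1) ^ 2 / (A1 * A2) + (c1 * A3 * X3 - c3 * A1 * X1) ^ 2 / (A1 * A3)
      + (c2 * A3 * X3 - c3 * A2 * X2) ^ 2 / (A2 * A3)) by (field; lra).
  assert (Hq : forall u w, 0 < w -> 0 <= u ^ 2 / w).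
  { intros u w Hw. apply Rmult_le_pos; [apply pow2_ge_0 | left; apply Rinv_0_lt_compat, Hw]. }
  pose proof (Hq (c1 * A2 * X2 - c2 * A1 * X1) (A1 * A2) ltac:(nra)).
  pose proof (Hq (c1 * A3 * X3 - c3 * A1 * X1) (A1 * A3) ltac:(nra)).
  pose proof (Hq (c2 * A3 * X3 - c3 * A2 * X2) (A2 * A3) ltac:(nra)).
  lra.
Qed.

Definition young_subadditive (V : R3 -> R) : Prop :=
  forall x y th, 0 < th -> V (add3 x y) <= (1 + th) * V x + (1 + / th) * V y.

Definition tri_form (A1 A2 A3 p q r : R) (y : R3) : R :=
  let '(y0, y1, y2) := y in
  A1 * (y0 + p * y1 + q * y2) ^ 2 + A2 * (y1 + r * y2) ^ 2 + A3 * y2 ^ 2.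

Section TriangularForm.

Variables (A1 A2 A3 p q r : R).
Hypotheses (HA1 : 0 < A1) (HA2 : 0 < A2) (HA3 : 0 < A3).

Lemma tri_form_young : young_subadditive (tri_form A1 A2 A3 p q r).
Proof.
  intros [[y0 y1] y2] [[z0 z1] z2] th Hth; simpl.
  pose proof (sqr_add_le_young (y0 + p * y1 + q * y2) (z0 + p * z1 + q * z2) th Hth).
  pose proof (sqr_add_le_young (y1 + r * y2) (z1 + r * z2) th Hth).
  pose proof (sqr_add_le_young y2 z2 th Hth).
  replace (y0 + z0 + p * (y1 + z1) + q * (y2 + z2))
    with ((y0 + p * y1 + q * y2) + (z0 + p * z1 + q * z2)) by ring.
  replace (y1 + z1 + r * (y2 + z2)) with ((y1 + r * y2) + (z1 + r * z2)) by ring.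
  nra.
Qed.

Lemma tri_form_ge_sqr :
  exists k, 0 < k /\ forall y0 y1 y2, k * y0 ^ 2 <= tri_form A1 A2 A3 p q r (y0, y1, y2).
Proof.
  set (C := 1 ^ 2 / A1 + (- p) ^ 2 / A2 + (p * r - q) ^ 2 / A3).
  assert (HC : 0 < C).
  { assert (0 < / A1) by (apply Rinv_0_lt_compat; lra).
    assert (0 <= (- p) ^ 2 / A2)
      by (apply Rmult_le_pos; [apply pow2_ge_0 | left; apply Rinv_0_lt_compat; lra]).
    assert (0 <= (p * r - q) ^ 2 / A3)
      by (apply Rmult_le_pos; [apply pow2_ge_0 | left; apply Rinv_0_lt_compat; lra]).
    unfold C, Rdiv. lra. }
  exists (/ C). split; [apply Rinv_0_lt_compat, HC |].
  intros y0 y1 y2.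
  (* y0 is a combination of the three linear forms whose squares make up the form *)
  pose proof (cauchy_schwarz3_weighted A1 A2 A3 1 (- p) (p * r - q)
                (y0 + p * y1 + q * y2) (y1 + r * y2) y2 HA1 HA2 HA3) as Hcs.
  replace (1 * (y0 + p * y1 + q * y2) + - p * (y1 + r * y2) + (p * r - q) * y2) with y0
    in Hcs by ring.
  fold C in Hcs. simpl.
  apply Rmult_le_reg_l with C; [exact HC |].
  rewrite <- Rmult_assoc, Rinv_r by lra. lra.
Qed.

Lemma tri_form_le_sqnorm :
  exists M, 0 < M /\ forall y, tri_form A1 A2 A3 p q r y <= M * sqnorm3 y.
Proof.
  exists (A1 * (1 + p ^ 2 + q ^ 2) + A2 * (1 + r ^ 2) + A3).
  split; [nra |].
  intros [[y0 y1] y2]; simpl.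
  pose proof (cauchy_schwarz3 1 p q y0 y1 y2).
  pose proof (cauchy_schwarz3 0 1 r y0 y1 y2).
  replace (1 * y0 + p * y1 + q * y2) with (y0 + p * y1 + q * y2) in * by ring.
  replace (0 * y0 + 1 * y1 + r * y2) with (y1 + r * y2) in * by ring.
  nra.
Qed.

End TriangularForm.

Lemma tri_form_scal3 (A1 A2 A3 p q r k : R) (y : R3) :
  tri_form A1 A2 A3 p q r (scal3 k y) = k ^ 2 * tri_form A1 A2 A3 p q r y.
Proof. destruct y as [[y0 y1] y2]; simpl; ring. Qed.

Lemma tri_form_rescale (A1 A2 A3 p q r rho y0 y1 y2 : R) :
  tri_form A1 A2 A3 p q r (y0, rho * y1, rho ^ 2 * y2)
  = tri_form A1 (A2 * rho ^ 2) (A3 * rho ^ 4) (p * rho) (q * rho ^ 2) (r * rho) (y0, y1, y2).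
Proof. simpl; ring. Qed.

(** * Schur-Cohn forms *)

Definition companion (a0 a1 a2 : R) (y : R3) : R3 :=
  let '(y0, y1, y2) := y in (y1, y2, - (a0 * y0 + a1 * y1 + a2 * y2)).

(* Lyapunov form of the recurrence [y (n+3) = - (a0 y n + a1 y (n+1) + a2 y (n+2))]
   obtained from the first step of the Schur-Cohn reduction of [X^3 + a2 X^2 + a1 X + a0]. *)
Definition schur_cohn_form (a0 a1 a2 : R) : R3 -> R :=
  let m := 1 - a0 ^ 2 in let t := a1 - a0 * a2 in let s := a2 - a0 * a1 in
  tri_form m ((m ^ 2 - t ^ 2) / m) ((m - t) * ((m + t) ^ 2 - s ^ 2) / (m * (m + t)))
    (s / m) (t / m) (s / (m + t)).

Definition schur_cohn_pos (a0 a1 a2 : R) : Prop :=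
  let m := 1 - a0 ^ 2 in let t := a1 - a0 * a2 in let s := a2 - a0 * a1 in
  0 < m - t /\ 0 < m + t - s /\ 0 < m + t + s.

Lemma schur_cohn_form_tri (a0 a1 a2 : R) : schur_cohn_pos a0 a1 a2 ->
  exists A1 A2 A3 p q r, 0 < A1 /\ 0 < A2 /\ 0 < A3 /\
    schur_cohn_form a0 a1 a2 = tri_form A1 A2 A3 p q r.
Proof.
  unfold schur_cohn_pos, schur_cohn_form.
  set (m := 1 - a0 ^ 2); set (t := a1 - a0 * a2); set (s := a2 - a0 * a1).
  intros [Hmt [Hms Hps]].
  do 6 eexists. split; [| split; [| split]]; [.. | reflexivity]; unfold Rdiv.
  - lra.
  - apply Rmult_lt_0_compat; [nra | apply Rinv_0_lt_compat; lra].
  - apply Rmult_lt_0_compat; [apply Rmult_lt_0_compat; nra |].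
    apply Rinv_0_lt_compat; nra.
Qed.

Lemma schur_cohn_form_companion (a0 a1 a2 : R) (y : R3) : schur_cohn_pos a0 a1 a2 ->
  schur_cohn_form a0 a1 a2 (companion a0 a1 a2 y) <= schur_cohn_form a0 a1 a2 y.
Proof.
  destruct y as [[y0 y1] y2].
  unfold schur_cohn_pos, schur_cohn_form, companion, tri_form.
  intros [Hmt [Hms Hps]].
  set (y3 := - (a0 * y0 + a1 * y1 + a2 * y2)).
  assert (Hdrop : forall u v, u - v = (y0 + a2 * y1 + a1 * y2 + a0 * y3) ^ 2 -> v <= u)
    by (intros u v Huv; pose proof (pow2_ge_0 (y0 + a2 * y1 + a1 * y2 + a0 * y3)); lra).
  apply Hdrop. unfold y3. field. split; lra.
Qed.

(* If [y] solves the recurrence with coefficients [a], then [rho ^ n * y n] solves the one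
   with coefficients [rho ^ 3 * a0, rho ^ 2 * a1, rho * a2]. *)
Definition scaled_schur_cohn_form (rho a0 a1 a2 : R) (y : R3) : R :=
  let '(y0, y1, y2) := y in
  schur_cohn_form (rho ^ 3 * a0) (rho ^ 2 * a1) (rho * a2) (y0, rho * y1, rho ^ 2 * y2).

Section ScaledSchurCohn.

Variables (rho a0 a1 a2 : R).
Hypotheses (Hrho : 0 < rho) (Hpos : schur_cohn_pos (rho ^ 3 * a0) (rho ^ 2 * a1) (rho * a2)).

Lemma scaled_schur_cohn_form_tri :
  exists A1 A2 A3 p q r, 0 < A1 /\ 0 < A2 /\ 0 < A3 /\
    forall y, scaled_schur_cohn_form rho a0 a1 a2 y = tri_form A1 A2 A3 p q r y.
Proof.
  destruct (schur_cohn_form_tri _ _ _ Hpos) as (A1 & A2 & A3 & p & q & r & H1 & H2 & H3 & HW).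
  exists A1, (A2 * rho ^ 2), (A3 * rho ^ 4), (p * rho), (q * rho ^ 2), (r * rho).
  split; [| split; [| split]]; [lra | | |];
    try (apply Rmult_lt_0_compat; [lra | apply pow_lt, Hrho]).
  intros [[y0 y1] y2].
  unfold scaled_schur_cohn_form. rewrite HW. apply tri_form_rescale.
Qed.

Lemma scaled_schur_cohn_form_companion (y : R3) :
  rho ^ 2 * scaled_schur_cohn_form rho a0 a1 a2 (companion a0 a1 a2 y)
  <= scaled_schur_cohn_form rho a0 a1 a2 y.
Proof.
  destruct y as [[y0 y1] y2].
  destruct (schur_cohn_form_tri _ _ _ Hpos) as (A1 & A2 & A3 & p & q & r & _ & _ & _ & HW).
  pose proof (schur_cohn_form_companion _ _ _ (y0, rho * y1, rho ^ 2 * y2) Hpos) as Hdec.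
  replace (companion (rho ^ 3 * a0) (rho ^ 2 * a1) (rho * a2) (y0, rho * y1, rho ^ 2 * y2))
    with (scal3 rho (y1, rho * y2, rho ^ 2 * - (a0 * y0 + a1 * y1 + a2 * y2)))
    in Hdec by (simpl; apply pair3_eq; ring).
  rewrite HW, tri_form_scal3, <- HW in Hdec. exact Hdec.
Qed.

End ScaledSchurCohn.

Lemma locally_pos_of_continuity (f : R -> R) (x : R) :
  continuity_pt f x -> 0 < f x -> locally x (fun r => 0 < f r).
Proof.
  intros Hf Hpos.
  apply (filter_imp (fun r => Rabs (f r - f x) < f x)).
  - intros r Hr. apply Rabs_def2 in Hr. lra.
  - exact (proj1 (continuity_pt_locally f x) Hf (mkposreal _ Hpos)).
Qed.

Lemma locally_exists_gt (x : R) (P : R -> Prop) : locally x P -> exists r, x < r /\ P r.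
Proof.
  intros [eps Heps]. pose proof (cond_pos eps).
  exists (x + eps / 2). split; [lra |].
  apply Heps. change (Rabs (x + eps / 2 - x) < eps). rewrite Rabs_right; lra.
Qed.

Lemma schur_cohn_pos_rescale (a0 a1 a2 : R) : schur_cohn_pos a0 a1 a2 ->
  exists rho, 1 < rho /\ schur_cohn_pos (rho ^ 3 * a0) (rho ^ 2 * a1) (rho * a2).
Proof.
  unfold schur_cohn_pos. intros [H1 [H2 H3]].
  apply locally_exists_gt.
  repeat apply filter_and; apply locally_pos_of_continuity; try reg; simpl; lra.
Qed.

(* Jury's conditions for [X^3 + a2 X^2 + a1 X + a0]. *)
Lemma schur_cohn_pos_of_jury (a0 a1 a2 : R) :
  0 < 1 + a2 + a1 + a0 -> 0 < 1 - a2 + a1 - a0 -> 0 < 1 - a0 ^ 2 - a1 + a0 * a2 -> a1 < 3 ->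
  schur_cohn_pos a0 a1 a2.
Proof.
  intros Hp1 Hm1 Hmt Ha1.
  assert (Ha0 : -1 < a0 < 1).
  { split; apply Rnot_le_lt; intros Ha0.
    - assert (a0 * a2 <= a0 * (-1 - a1 - a0)) by (apply Rmult_le_compat_neg_l; lra). nra.
    - assert (a0 * a2 <= a0 * (1 + a1 - a0)) by (apply Rmult_le_compat_l; lra). nra. }
  unfold schur_cohn_pos. split; [| split].
  - lra.
  - replace (1 - a0 ^ 2 + (a1 - a0 * a2) - (a2 - a0 * a1)) with ((1 + a0) * (1 - a2 + a1 - a0))
      by ring. apply Rmult_lt_0_compat; lra.
  - replace (1 - a0 ^ 2 + (a1 - a0 * a2) + (a2 - a0 * a1)) with ((1 - a0) * (1 + a2 + a1 + a0))
      by ring. apply Rmult_lt_0_compat; lra.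
Qed.

(** * Quadratic Lyapunov functions of linear maps *)

(* The coordinates of an orbit of [J] solve the recurrence given by the characteristic
   polynomial of [J], so [W] is applied to the coordinate triples of [x], [J x], [J (J x)]. *)
Definition lift_form (W : R3 -> R) (J : R3 -> R3) (x : R3) : R :=
  let '(x1, x2, x3) := x in let '(y1, y2, y3) := J x in let '(z1, z2, z3) := J (J x) in
  W (x1, y1, z1) + W (x2, y2, z2) + W (x3, y3, z3).

Section LiftForm.

Variables (W : R3 -> R) (J : R3 -> R3) (a0 a1 a2 rho k M NJ : R).
Hypotheses (HWyoung : young_subadditive W)
  (HWlow : forall y0 y1 y2, k * y0 ^ 2 <= W (y0, y1, y2))
  (HM : 0 < M) (HWup : forall y, W y <= M * sqnorm3 y)
  (HWdecay : forall y, rho ^ 2 * W (companion a0 a1 a2 y) <= W y).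
Hypotheses (HJadd : forall x y, J (add3 x y) = add3 (J x) (J y))
  (HNJ : 0 <= NJ) (HJbound : forall x, sqnorm3 (J x) <= NJ * sqnorm3 x)
  (HJcayley : forall x, add3 (J (J (J x)))
     (add3 (scal3 a2 (J (J x))) (add3 (scal3 a1 (J x)) (scal3 a0 x))) = (0, 0, 0)).

Lemma lift_form_young : young_subadditive (lift_form W J).
Proof.
  intros x y th Hth. unfold lift_form.
  rewrite !HJadd.
  destruct x as [[x1 x2] x3], y as [[y1 y2] y3].
  destruct (J (J (x1, x2, x3))) as [[u1 u2] u3], (J (J (y1, y2, y3))) as [[v1 v2] v3].
  destruct (J (x1, x2, x3)) as [[p1 p2] p3], (J (y1, y2, y3)) as [[q1 q2] q3]. simpl.
  pose proof (HWyoung (x1, p1, u1) (y1, q1, v1) th Hth).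
  pose proof (HWyoung (x2, p2, u2) (y2, q2, v2) th Hth).
  pose proof (HWyoung (x3, p3, u3) (y3, q3, v3) th Hth).
  simpl in *. lra.
Qed.

Lemma lift_form_ge_sqnorm3 (x : R3) : k * sqnorm3 x <= lift_form W J x.
Proof.
  destruct x as [[x1 x2] x3]. unfold lift_form.
  destruct (J (J (x1, x2, x3))) as [[u1 u2] u3], (J (x1, x2, x3)) as [[p1 p2] p3]. simpl.
  pose proof (HWlow x1 p1 u1). pose proof (HWlow x2 p2 u2). pose proof (HWlow x3 p3 u3).
  lra.
Qed.

Lemma lift_form_le_sqnorm3 (x : R3) :
  lift_form W J x <= M * (1 + NJ + NJ ^ 2) * sqnorm3 x.
Proof.
  assert (Hsum : lift_form W J x <= M * (sqnorm3 x + sqnorm3 (J x) + sqnorm3 (J (J x)))).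
  { destruct x as [[x1 x2] x3]. unfold lift_form.
    destruct (J (J (x1, x2, x3))) as [[u1 u2] u3], (J (x1, x2, x3)) as [[p1 p2] p3]. simpl.
    pose proof (HWup (x1, p1, u1)). pose proof (HWup (x2, p2, u2)).
    pose proof (HWup (x3, p3, u3)). simpl in *. lra. }
  pose proof (HJbound x). pose proof (HJbound (J x)). pose proof (sqnorm3_ge0 x).
  assert (NJ * sqnorm3 (J x) <= NJ * (NJ * sqnorm3 x)) by (apply Rmult_le_compat_l; lra).
  nra.
Qed.

Lemma lift_form_decay (x : R3) : rho ^ 2 * lift_form W J (J x) <= lift_form W J x.
Proof.
  pose proof (HJcayley x) as Hch. unfold lift_form.
  destruct (J (J (J x))) as [[w1 w2] w3], (J (J x)) as [[u1 u2] u3], (J x) as [[p1 p2] p3],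
    x as [[x1 x2] x3].
  simpl in Hch. injection Hch as H1 H2 H3.
  pose proof (HWdecay (x1, p1, u1)). pose proof (HWdecay (x2, p2, u2)).
  pose proof (HWdecay (x3, p3, u3)). simpl in *.
  replace w1 with (- (a0 * x1 + a1 * p1 + a2 * u1)) by lra.
  replace w2 with (- (a0 * x2 + a1 * p2 + a2 * u2)) by lra.
  replace w3 with (- (a0 * x3 + a1 * p3 + a2 * u3)) by lra.
  lra.
Qed.

End LiftForm.

Definition quadratic_lyapunov (J : R3 -> R3) (V : R3 -> R) (k M rho : R) : Prop :=
  0 < k /\ 0 < M /\ 1 < rho /\
  (forall x, k * sqnorm3 x <= V x) /\ (forall x, V x <= M * sqnorm3 x) /\
  young_subadditive V /\ (forall x, rho ^ 2 * V (J x) <= V x).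

Lemma lyapunov_of_schur_cohn (J : R3 -> R3) (a0 a1 a2 NJ : R) :
  (forall x y, J (add3 x y) = add3 (J x) (J y)) ->
  (forall x, sqnorm3 (J x) <= NJ * sqnorm3 x) ->
  (forall x, add3 (J (J (J x)))
     (add3 (scal3 a2 (J (J x))) (add3 (scal3 a1 (J x)) (scal3 a0 x))) = (0, 0, 0)) ->
  schur_cohn_pos a0 a1 a2 ->
  exists V k M rho, quadratic_lyapunov J V k M rho.
Proof.
  intros HJadd HJbound HJcayley Hpos.
  assert (HNJ : 0 <= NJ).
  { pose proof (HJbound (1, 0, 0)). pose proof (sqnorm3_ge0 (J (1, 0, 0))).
    simpl in *. lra. }
  destruct (schur_cohn_pos_rescale a0 a1 a2 Hpos) as [rho [Hrho Hpos_rho]].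
  destruct (scaled_schur_cohn_form_tri rho a0 a1 a2 ltac:(lra) Hpos_rho)
    as (A1 & A2 & A3 & p & q & r & H1 & H2 & H3 & HW).
  set (W := scaled_schur_cohn_form rho a0 a1 a2).
  assert (HWyoung : young_subadditive W).
  { intros y z th Hth. rewrite !HW. apply tri_form_young; assumption. }
  destruct (tri_form_ge_sqr A1 A2 A3 p q r H1 H2 H3) as [k [Hk HWlow]].
  destruct (tri_form_le_sqnorm A1 A2 A3 p q r H1 H2 H3) as [M [HM HWup]].
  exists (lift_form W J), k, (M * (1 + NJ + NJ ^ 2)), rho.
  split; [exact Hk | split; [nra | split; [exact Hrho |]]].
  split; [| split; [| split]].
  - apply lift_form_ge_sqnorm3. intros. rewrite HW. apply HWlow.
  - apply lift_form_le_sqnorm3; [exact HM | | exact HNJ | exact HJbound].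
    intros. rewrite HW. apply HWup.
  - apply lift_form_young; [exact HWyoung | exact HJadd].
  - apply lift_form_decay with a0 a1 a2; [| exact HJcayley].
    intros y. apply scaled_schur_cohn_form_companion. exact Hpos_rho.
Qed.

(** * Local asymptotic stability from a Lyapunov function *)

Section LyapunovStability.

Variables (V : R3 -> R) (k M : R).
Hypotheses (Hk : 0 < k) (HM : 0 < M)
  (HVlow : forall x, k * sqnorm3 x <= V x) (HVup : forall x, V x <= M * sqnorm3 x).

Lemma lyapunov_ge0 (x : R3) : 0 <= V x.
Proof. pose proof (HVlow x). pose proof (sqnorm3_ge0 x). nra. Qed.

Lemma lyapunov_perturbed_contraction (J Rm : R3 -> R3) (rho : R) :
  1 < rho -> young_subadditive V -> (forall x, rho ^ 2 * V (J x) <= V x) ->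
  (forall e, 0 < e -> exists eta, 0 < eta /\
     forall x, sqnorm3 x < eta -> sqnorm3 (Rm x) <= e * sqnorm3 x) ->
  exists eta q, 0 < eta /\ 0 <= q < 1 /\
    forall x, V x < eta -> V (add3 (J x) (Rm x)) <= q * V x.
Proof.
  intros Hrho Hyoung Hdecay Hsmall.
  set (th := (rho ^ 2 - 1) / 2).
  set (k1 := (1 + th) / rho ^ 2).
  assert (Hrho2 : 1 < rho ^ 2) by nra.
  assert (Hth : 0 < th) by (unfold th; lra).
  assert (Hith : 0 < 1 + / th) by (pose proof (Rinv_0_lt_compat th Hth); lra).
  assert (Hk1 : 0 < k1 < 1).
  { unfold k1, th. split.
    - apply Rdiv_lt_0_compat; lra.
    - apply Rmult_lt_reg_r with (rho ^ 2); [lra |]. field_simplify; lra. }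
  (* the remainder may cost half of the margin [1 - k1] left by the linear part *)
  set (e := (1 - k1) * k / (2 * (1 + / th) * M)).
  assert (He : 0 < e).
  { unfold e. apply Rdiv_lt_0_compat; [nra | ].
    apply Rmult_lt_0_compat; [lra | exact HM]. }
  destruct (Hsmall e He) as [eta [Heta HRm]].
  exists (k * eta), ((1 + k1) / 2). split; [nra | split; [lra |]].
  intros x Hx.
  assert (Hnx : sqnorm3 x < eta) by (pose proof (HVlow x); nra).
  assert (Hlin : (1 + th) * V (J x) <= k1 * V x).
  { unfold k1. pose proof (Hdecay x).
    apply Rmult_le_reg_l with (rho ^ 2); [lra |].
    replace (rho ^ 2 * ((1 + th) / rho ^ 2 * V x)) with ((1 + th) * V x) by (field; lra).
    nra. }
  assert (Hrem : (1 + / th) * V (Rm x) <= (1 - k1) / 2 * V x).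
  { pose proof (HVup (Rm x)). pose proof (HRm x Hnx). pose proof (HVlow x).
    apply Rle_trans with ((1 + / th) * (M * (e * sqnorm3 x))).
    { apply Rmult_le_compat_l; [lra |].
      apply Rle_trans with (M * sqnorm3 (Rm x)); [assumption |].
      apply Rmult_le_compat_l; lra. }
    replace ((1 + / th) * (M * (e * sqnorm3 x))) with ((1 - k1) / 2 * (k * sqnorm3 x))
      by (unfold e; field; lra).
    apply Rmult_le_compat_l; lra. }
  pose proof (Hyoung (J x) (Rm x) th Hth). lra.
Qed.

Lemma lyapunov_lt_of_dist3_lt (p s : R3) (m : R) :
  0 < m -> dist3 p s < sqrt (m / M) -> V (sub3 p s) < m.
Proof.
  intros Hm Hp. rewrite dist3_sqnorm3 in Hp.
  apply sqrt_lt_0_alt in Hp.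
  pose proof (HVup (sub3 p s)).
  apply Rle_lt_trans with (M * sqnorm3 (sub3 p s)); [assumption |].
  apply Rmult_lt_compat_l with (r := M) in Hp; [| exact HM].
  replace (M * (m / M)) with m in Hp by (field; lra). exact Hp.
Qed.

Lemma dist3_lt_of_lyapunov_lt (p s : R3) (eps : R) :
  0 < eps -> V (sub3 p s) < k * eps ^ 2 -> dist3 p s < eps.
Proof.
  intros Heps Hp. rewrite dist3_sqnorm3.
  rewrite <- (sqrt_pow2 eps) by lra. apply sqrt_lt_1_alt.
  split; [apply sqnorm3_ge0 |].
  pose proof (HVlow (sub3 p s)).
  apply Rmult_lt_reg_l with k; [exact Hk | lra].
Qed.

Section Contraction.

Variables (F : R3 -> R3) (s : R3) (eta q : R).
Hypotheses (Heta : 0 < eta) (Hq : 0 <= q < 1)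
  (Hstep : forall p, V (sub3 p s) < eta -> V (sub3 (F p) s) <= q * V (sub3 p s)).

Lemma lyapunov_iter (p : R3) : V (sub3 p s) < eta ->
  forall n, V (sub3 (Nat.iter n F p) s) <= q ^ n * V (sub3 p s).
Proof.
  intros Hp n. induction n as [| n IH]; simpl; [lra |].
  pose proof (lyapunov_ge0 (sub3 p s)).
  assert (Hqn : 0 <= q ^ n <= 1)
    by (split; [apply pow_le | rewrite <- (pow1 n); apply pow_incr]; lra).
  assert (V (sub3 (Nat.iter n F p) s) < eta) by nra.
  pose proof (Hstep _ H0). nra.
Qed.

Lemma las_of_lyapunov_contraction : locally_asymptotically_stable F s.
Proof.
  assert (Hqn : forall n, 0 <= q ^ n <= 1)
    by (intros n; split; [apply pow_le | rewrite <- (pow1 n); apply pow_incr]; lra).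
  split.
  - intros eps Heps.
    set (m := Rmin eta (k * eps ^ 2)).
    assert (Hm : 0 < m) by (apply Rmin_pos; [lra | apply Rmult_lt_0_compat; [lra | nra]]).
    exists (sqrt (m / M)). split; [apply sqrt_lt_R0, Rdiv_lt_0_compat; lra |].
    intros p Hp n.
    pose proof (lyapunov_lt_of_dist3_lt p s m Hm Hp) as HV.
    assert (Hm1 : m <= eta) by apply Rmin_l.
    assert (Hm2 : m <= k * eps ^ 2) by apply Rmin_r.
    apply dist3_lt_of_lyapunov_lt; [exact Heps |].
    pose proof (lyapunov_iter p ltac:(lra) n).
    pose proof (Hqn n). pose proof (lyapunov_ge0 (sub3 p s)). nra.
  - exists (sqrt (eta / M)). split; [apply sqrt_lt_R0, Rdiv_lt_0_compat; lra |].
    intros p Hp eps Heps.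
    pose proof (lyapunov_lt_of_dist3_lt p s eta Heta Hp) as HV.
    pose proof (lyapunov_ge0 (sub3 p s)).
    assert (Hy : 0 < k * eps ^ 2 / (V (sub3 p s) + 1))
      by (apply Rdiv_lt_0_compat; [apply Rmult_lt_0_compat; [lra | nra] | lra]).
    destruct (pow_lt_1_zero q ltac:(rewrite Rabs_right; lra) _ Hy) as [N HN].
    exists N. intros n Hn. specialize (HN n Hn).
    rewrite Rabs_right in HN by (apply Rle_ge, pow_le; lra).
    unfold R_dist. rewrite Rminus_0_r, Rabs_right
      by (rewrite dist3_sqnorm3; apply Rle_ge, sqrt_pos).
    apply dist3_lt_of_lyapunov_lt; [exact Heps |].
    pose proof (lyapunov_iter p HV n).
    apply Rmult_lt_compat_r with (r := V (sub3 p s) + 1) in HN; [| lra].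
    replace (k * eps ^ 2 / (V (sub3 p s) + 1) * (V (sub3 p s) + 1)) with (k * eps ^ 2) in HN
      by (field; lra).
    pose proof (Hqn n). nra.
Qed.

End Contraction.

End LyapunovStability.

(** * Linearization of G at S* *)

Definition jacobian3 (j11 j12 j13 j21 j22 : R) (x : R3) : R3 :=
  let '(x1, x2, x3) := x in (j11 * x1 + j12 * x2 + j13 * x3, j21 * x1 + j22 * x2, x1).

Section Jacobian3.

Variables (j11 j12 j13 j21 j22 : R).

Lemma jacobian3_add (x y : R3) :
  jacobian3 j11 j12 j13 j21 j22 (add3 x y)
  = add3 (jacobian3 j11 j12 j13 j21 j22 x) (jacobian3 j11 j12 j13 j21 j22 y).
Proof. destruct x as [[? ?] ?], y as [[? ?] ?]; simpl; apply pair3_eq; ring. Qed.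

Lemma jacobian3_sqnorm3_le (x : R3) :
  sqnorm3 (jacobian3 j11 j12 j13 j21 j22 x)
  <= (j11 ^ 2 + j12 ^ 2 + j13 ^ 2 + j21 ^ 2 + j22 ^ 2 + 1) * sqnorm3 x.
Proof.
  destruct x as [[x1 x2] x3]; simpl.
  pose proof (cauchy_schwarz3 j11 j12 j13 x1 x2 x3).
  pose proof (cauchy_schwarz3 j21 j22 0 x1 x2 x3).
  replace (j21 * x1 + j22 * x2 + 0 * x3) with (j21 * x1 + j22 * x2) in * by ring.
  nra.
Qed.

Lemma jacobian3_cayley_hamilton (x : R3) :
  let J := jacobian3 j11 j12 j13 j21 j22 in
  add3 (J (J (J x)))
    (add3 (scal3 (- (j11 + j22)) (J (J x)))
       (add3 (scal3 (j11 * j22 - j12 * j21 - j13) (J x)) (scal3 (j13 * j22) x))) = (0, 0, 0).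
Proof. destruct x as [[? ?] ?]; simpl; apply pair3_eq; ring. Qed.

End Jacobian3.

Definition taylor_remainder (f : R -> R) (l v : R) : R := f v - l * v.

Lemma taylor_remainder_small (f : R -> R) (l : R) :
  derivable_pt_lim f 0 l -> f 0 = 0 ->
  forall e, 0 < e -> exists dl, 0 < dl /\
    forall v, v ^ 2 < dl -> taylor_remainder f l v ^ 2 <= e * v ^ 2.
Proof.
  intros Hf Hf0 e He.
  destruct (Hf (sqrt e) (sqrt_lt_R0 e He)) as [delta Hdelta].
  pose proof (cond_pos delta).
  exists (delta ^ 2). split; [nra |].
  intros v Hv. unfold taylor_remainder.
  destruct (Req_dec v 0) as [-> | Hv0]; [rewrite Hf0; nra |].
  assert (Habs : Rabs v < delta).
  { apply Rnot_le_lt. intros Hle. pose proof (pow2_abs v). pose proof (Rabs_pos v). nra. }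
  specialize (Hdelta v Hv0 Habs). rewrite Rplus_0_l, Hf0, Rminus_0_r in Hdelta.
  replace (f v - l * v) with (v * (f v / v - l)) by (field; exact Hv0).
  replace ((v * (f v / v - l)) ^ 2) with (v ^ 2 * Rabs (f v / v - l) ^ 2)
    by (rewrite pow2_abs; ring).
  pose proof (pow2_sqrt e ltac:(lra)). pose proof (Rabs_pos (f v / v - l)).
  pose proof (sqrt_pos e). pose proof (pow2_ge_0 v).
  rewrite (Rmult_comm e). apply Rmult_le_compat_l; nra.
Qed.

Definition G_remainder (fI fP : R -> R) (gamma lI lP wd : R) (x : R3) : R3 :=
  let '(x1, x2, x3) := x in
  (gamma * taylor_remainder fI lI (x1 - x3), taylor_remainder fP lP (x2 - wd * x1), 0).

Lemma G_remainder_small (fI fP : R -> R) (gamma lI lP wd : R) :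
  derivable_pt_lim fI 0 lI -> fI 0 = 0 -> derivable_pt_lim fP 0 lP -> fP 0 = 0 ->
  forall e, 0 < e -> exists eta, 0 < eta /\
    forall x, sqnorm3 x < eta -> sqnorm3 (G_remainder fI fP gamma lI lP wd x) <= e * sqnorm3 x.
Proof.
  intros HI HI0 HP HP0 e He.
  set (C := 2 * gamma ^ 2 + 1 + wd ^ 2).
  assert (HC : 0 < C) by (unfold C; nra).
  destruct (taylor_remainder_small fI lI HI HI0 (e / C) ltac:(apply Rdiv_lt_0_compat; lra))
    as [dI [HdI HTI]].
  destruct (taylor_remainder_small fP lP HP HP0 (e / C) ltac:(apply Rdiv_lt_0_compat; lra))
    as [dP [HdP HTP]].
  assert (Hw : 0 < 1 + wd ^ 2) by nra.
  exists (Rmin (dI / 2) (dP / (1 + wd ^ 2))).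
  split; [apply Rmin_pos; apply Rdiv_lt_0_compat; lra |].
  intros [[x1 x2] x3] Hx. cbn [sqnorm3 G_remainder] in Hx |- *.
  pose proof (Rmin_l (dI / 2) (dP / (1 + wd ^ 2))).
  pose proof (Rmin_r (dI / 2) (dP / (1 + wd ^ 2))).
  assert (HuI : (x1 - x3) ^ 2 <= 2 * (x1 ^ 2 + x2 ^ 2 + x3 ^ 2))
    by (pose proof (pow2_ge_0 (x1 + x3)); pose proof (pow2_ge_0 x2); nra).
  assert (HuP : (x2 - wd * x1) ^ 2 <= (1 + wd ^ 2) * (x1 ^ 2 + x2 ^ 2 + x3 ^ 2)).
  { pose proof (cauchy_schwarz3 (- wd) 1 0 x1 x2 x3).
    replace (- wd * x1 + 1 * x2 + 0 * x3) with (x2 - wd * x1) in * by ring.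
    replace ((- wd) ^ 2 + 1 ^ 2 + 0 ^ 2) with (1 + wd ^ 2) in * by ring. lra. }
  assert (HrI : (x1 - x3) ^ 2 < dI) by lra.
  assert (HrP : (x2 - wd * x1) ^ 2 < dP).
  { apply Rle_lt_trans with ((1 + wd ^ 2) * (x1 ^ 2 + x2 ^ 2 + x3 ^ 2)); [exact HuP |].
    replace dP with ((1 + wd ^ 2) * (dP / (1 + wd ^ 2))) by (field; lra).
    apply Rmult_lt_compat_l; lra. }
  set (e1 := e / C). set (S := x1 ^ 2 + x2 ^ 2 + x3 ^ 2).
  assert (He1 : 0 <= e1) by (apply Rlt_le, Rdiv_lt_0_compat; lra).
  pose proof (HTI _ HrI) as HTI'. pose proof (HTP _ HrP) as HTP'.
  assert (HI2 : taylor_remainder fI lI (x1 - x3) ^ 2 <= e1 * (2 * S))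
    by (apply Rle_trans with (1 := HTI'); apply Rmult_le_compat_l; assumption).
  assert (HP2 : taylor_remainder fP lP (x2 - wd * x1) ^ 2 <= e1 * ((1 + wd ^ 2) * S))
    by (apply Rle_trans with (1 := HTP'); apply Rmult_le_compat_l; assumption).
  replace (e * S) with (e1 * (C * S)) by (unfold e1; field; lra).
  unfold C. pose proof (pow2_ge_0 gamma). nra.
Qed.

Lemma admissible_g_at_0 (g : R -> R) : admissible_g g -> derivable_pt_lim g 0 1 /\ g 0 = 0.
Proof.
  intros [[g' [Hd [_ [Hg'0 _]]]] [Hg0 _]].
  split; [rewrite <- Hg'0; apply Hd | exact Hg0].
Qed.

(* The argument of [g_P] in [G_2], as a function of the mispricing
   [u = P - (1 - omega) F* - omega d Y]. *)
Definition price_drive (b beta mu u : R) : R :=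
  mu * (- u + b * (2 * / (1 + exp (- (4 * b * beta * u))) - 1)).

Lemma price_drive_0 (b beta mu : R) : price_drive b beta mu 0 = 0.
Proof. unfold price_drive. rewrite Rmult_0_r, Ropp_0, exp_0. field. Qed.

Lemma price_drive_derivative_0 (b beta mu : R) :
  derivable_pt_lim (price_drive b beta mu) 0 (mu * (-1 + 2 * b ^ 2 * beta)).
Proof.
  apply is_derive_Reals. unfold price_drive. auto_derive;
    rewrite Rmult_0_r, Ropp_0, exp_0; lra.
Qed.

Lemma price_term_at_0 (gP : R -> R) (b beta mu sigma : R) : admissible_g gP ->
  let f := fun u => sigma * gP (price_drive b beta mu u) in
  derivable_pt_lim f 0 (- (mu * sigma * (1 - 2 * b ^ 2 * beta))) /\ f 0 = 0.
Proof.
  intros HgP f. destruct (admissible_g_at_0 gP HgP) as [HdP HP0].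
  rewrite <- (price_drive_0 b beta mu) in HdP. split.
  - replace (- (mu * sigma * (1 - 2 * b ^ 2 * beta)))
      with (sigma * (1 * (mu * (-1 + 2 * b ^ 2 * beta)))) by ring.
    apply derivable_pt_lim_scal, derivable_pt_lim_comp;
      [apply price_drive_derivative_0 | exact HdP].
  - unfold f. rewrite price_drive_0, HP0. ring.
Qed.

Lemma G_linearization (gI gP : R -> R) (A c gamma omega h d sigma mu Fs b beta E : R) (p : R3) :
  1 - c - omega ^ 2 * d * h <> 0 -> E = mu * sigma * (1 - 2 * b ^ 2 * beta) ->
  let s := Sstar A c omega h d Fs in
  sub3 (G gI gP A c gamma omega h d sigma mu Fs b beta p) s =
  add3 (jacobian3 (c + gamma) (omega * h) (- gamma) (omega * d * E) (1 - E) (sub3 p s))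
    (G_remainder gI (fun u => sigma * gP (price_drive b beta mu u)) gamma 1 (- E) (omega * d)
       (sub3 p s)).
Proof.
  intros HD HE s. destruct p as [[Y P] Z].
  set (Ys := Ystar A c omega h d Fs). set (Ps := Pstar A c omega h d Fs).
  assert (HYs : A = Ys - c * Ys - omega * h * Ps)
    by (unfold Ys, Ps, Ystar, Pstar; field; exact HD).
  assert (HPs : Ps - (1 - omega) * Fs - omega * d * Ys = 0)
    by (unfold Ys, Ps, Ystar, Pstar; field; exact HD).
  unfold G, alpha, G_remainder, taylor_remainder, s, Sstar. fold Ys Ps.
  cbn [sub3 add3 jacobian3].
  remember (P - (1 - omega) * Fs - omega * d * Y) as u eqn:Hu0.
  replace (mu * ((1 - omega) * Fs + omega * d * Y - P
                  + b * (2 * / (1 + exp (- (4 * b * beta * u))) - 1)))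
    with (price_drive b beta mu u) by (unfold price_drive; rewrite Hu0; ring).
  replace u with (P - Ps - omega * d * (Y - Ys)) by lra.
  replace (Y - Ys - (Z - Ys)) with (Y - Z) by ring.
  apply pair3_eq; [rewrite HYs | rewrite HE |]; ring.
Qed.

Lemma G_jacobian_schur_cohn (c gamma omega d h E : R) :
  0 < E -> 0 < 1 - c - omega ^ 2 * d * h ->
  (2 - E) * (1 + c + 2 * gamma) - omega ^ 2 * d * h * E > 0 ->
  1 - c + c * E + omega ^ 2 * d * h * E + gamma * c - E * gamma - E * gamma * c
    + E ^ 2 * gamma - E ^ 2 * gamma ^ 2 + E * gamma ^ 2 - gamma > 0 ->
  2 * gamma + c - c * E - gamma * E - omega ^ 2 * d * h * E < 3 ->
  let j11 := c + gamma in let j12 := omega * h in let j13 := - gamma in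
  let j21 := omega * d * E in let j22 := 1 - E in
  schur_cohn_pos (j13 * j22) (j11 * j22 - j12 * j21 - j13) (- (j11 + j22)).
Proof.
  intros HE HK Hm1 Hdet Ha1 j11 j12 j13 j21 j22.
  apply schur_cohn_pos_of_jury; unfold j11, j12, j13, j21, j22.
  - replace (1 + _ + _ + _) with (E * (1 - c - omega ^ 2 * d * h)) by ring.
    apply Rmult_lt_0_compat; assumption.
  - apply Rlt_le_trans with (1 := Hm1). right. ring.
  - apply Rlt_le_trans with (1 := Hdet). right. ring.
  - apply Rle_lt_trans with (2 := Ha1). right. ring.
Qed.

Theorem proposition4
  (gI gP : R -> R) (A c gamma omega h d sigma mu Fs b beta : R)
  (HgI : admissible_g gI) (HgP : admissible_g gP)
  (HA : 0 < A) (Hc : 0 < c < 1) (Hgamma : 0 < gamma) (Homega : 0 <= omega <= 1)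
  (Hh : 0 < h) (Hd : 0 < d) (Hsigma : 0 < sigma) (Hmu : 0 < mu) (HFs : 0 < Fs)
  (Hb : 0 < b) (Hbeta : 0 < beta)
  (HA1 : 1 - c - h * d > 0) :
  let E := mu * sigma * (1 - 2 * b ^ 2 * beta) in
  2 * b ^ 2 * beta - 1 < 0 ->
  (2 - E) * (1 + c + 2 * gamma) - omega ^ 2 * d * h * E > 0 ->
  1 - c + c * E + omega ^ 2 * d * h * E + gamma * c - E * gamma - E * gamma * c
    + E ^ 2 * gamma - E ^ 2 * gamma ^ 2 + E * gamma ^ 2 - gamma > 0 ->
  2 * gamma + c - c * E - gamma * E - omega ^ 2 * d * h * E < 3 ->
  locally_asymptotically_stable
    (G gI gP A c gamma omega h d sigma mu Fs b beta)
    (Sstar A c omega h d Fs).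
Proof.
  intros E Hb2 Hjury_m1 Hjury_det Hjury_a1.
  assert (HE : 0 < E) by (apply Rmult_lt_0_compat; [apply Rmult_lt_0_compat |]; lra).
  assert (HK : 0 < 1 - c - omega ^ 2 * d * h).
  { assert (omega ^ 2 * (d * h) <= 1 * (d * h)) by (apply Rmult_le_compat_r; nra). lra. }
  set (J := jacobian3 (c + gamma) (omega * h) (- gamma) (omega * d * E) (1 - E)).
  destruct (lyapunov_of_schur_cohn J _ _ _ _ (jacobian3_add _ _ _ _ _)
              (jacobian3_sqnorm3_le _ _ _ _ _) (jacobian3_cayley_hamilton _ _ _ _ _)
              (G_jacobian_schur_cohn c gamma omega d h E HE HK Hjury_m1 Hjury_det Hjury_a1))
    as (V & k & M & rho & Hk & HM & Hrho & Hlow & Hup & Hyoung & Hdecay).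
  destruct (admissible_g_at_0 gI HgI) as [HdI HI0].
  destruct (price_term_at_0 gP b beta mu sigma HgP) as [HdP HP0].
  destruct (lyapunov_perturbed_contraction V k M Hk HM Hlow Hup J
              _ rho Hrho Hyoung Hdecay
              (G_remainder_small _ _ gamma _ _ (omega * d) HdI HI0 HdP HP0))
    as (eta & q & Heta & Hq & Hstep).
  apply (las_of_lyapunov_contraction V k M Hk HM Hlow Hup _ _ eta q Heta Hq).
  intros p Hp. rewrite G_linearization with (E := E) by (reflexivity || lra).
  apply Hstep, Hp.
Qed.
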